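(* Let $F,G$ be finitely supported sequences on $\mathbb{Z}$ with values in $\mathbb{D}$, with $\operatorname{supp}F\subset(-\infty,N_1]$, $\operatorname{supp}G\subset[-N_2,\infty)$, and let $N>N_1+N_2$. Then for every $M\geqslant -N_2$: $$\mathfrak{a}^{( * )}(z,F+(G^{\leqslant M})_{\to N})=\mathfrak{a}^{( * )}(z,F)\mathfrak{a}^{( * )}(z,G^{\leqslant M})+z^N\mathfrak{b}^{( * )}(z,F)\mathfrak{b}(z,G^{\leqslant M}),$$ $$\mathfrak{b}(z,F+(G^{\leqslant M})_{\to N})=z^N\mathfrak{b}(z,G^{\leqslant M})\mathfrak{a}(z,F)+\mathfrak{b}(z,F)\mathfrak{a}^{( * )}(z,G^{\leqslant M}),$$ and, for $z\in\mathbb{T}$, $$|\mathfrak{r}(z,F+(G^{\leqslant M})_{\to N})-\mathfrak{r}(z,F)|\leqslant\frac{|\mathfrak{r}(z,G^{\leqslant M})|}{1-|\mathfrak{r}(z,G^{\leqslant M})|}.$$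
   Context: $\mathbb{T}$, $\mathbb{D}$ denote the unit circle and open unit disc. For a sequence $H$ on $\mathbb{Z}$ and $M,N\in\mathbb{Z}$: $(H_{\to N})_n=H_{n-N}$ and $H^{\leqslant M}=H\chi_{n\leqslant M}$. For a finitely supported sequence $G$ with values in $\mathbb{D}$: let $\widetilde X_n(z)=I$ for $n$ below the support and $\widetilde X_n=(1-|G_n|^2)^{-1/2}\begin{pmatrix}1&\overline{G_n}z^{-n}\\ G_nz^n&1\end{pmatrix}\widetilde X_{n-1}$; for $n$ above the support $\widetilde X_n=\begin{pmatrix}\mathfrak{a}(z,G)&\mathfrak{b}^{( * )}(z,G)\\ \mathfrak{b}(z,G)&\mathfrak{a}^{( * )}(z,G)\end{pmatrix}$, where $f^{( * )}(z)=\overline{f(\bar z^{-1})}$. Also $\mathfrak{r}(z,G)=\mathfrak{b}(z,G)/\mathfrak{a}^{( * )}(z,G)$. *)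

From HB Require Import structures.
From mathcomp Require Import all_boot all_order all_algebra.
From mathcomp Require Import classical_sets reals.
From mathcomp Require Import complex.
Set Implicit Arguments. Unset Strict Implicit. Unset Printing Implicit Defensive.
Import Order.TTheory GRing.Theory Num.Theory.
Local Open Scope ring_scope.

Section Nlft.
Variable R : realType.
Local Notation C := R[i].

Definition disc_fin_seq (G : int -> C) : Prop :=
  (forall n, `|G n| < 1) /\ exists K : nat, forall n : int, (K < `|n|)%N -> G n = 0.

Definition step (G : int -> C) (n : int) (z : C) : 'M[C]_2 :=
  (sqrtC (1 - `|G n| ^+ 2))^-1 *:
    \matrix_(i < 2, j < 2)
      (if i == j then 1
       else if i == 0 then (G n)^* * z ^ (- n) else G n * z ^ n).

(* X = step_{L+len-1} * ... * step_{L+1} * step_L *)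
Definition transfer (G : int -> C) (L : int) (len : nat) (z : C) : 'M[C]_2 :=
  \prod_(k <- rev (iota 0 len)) step G (L + k%:Z) z.

(* some K with G n = 0 for |n| > K (chosen classically; 0 if none) *)
Definition supp_bound (G : int -> C) : nat :=
  xget 0%N [set K : nat | forall n : int, (K < `|n|)%N -> G n = 0].

(* the transfer matrix above the support: [[a, b^star], [b, a^star]] *)
Definition Xfin (G : int -> C) (z : C) : 'M[C]_2 :=
  transfer G (- (supp_bound G)%:Z) (2 * supp_bound G).+1 z.

Definition nlft_a (G : int -> C) (z : C) : C := Xfin G z 0 0.
Definition nlft_b (G : int -> C) (z : C) : C := Xfin G z 1 0.

Definition fstar (f : C -> C) (z : C) : C := (f ((z^*)^-1))^*.

Definition nlft_r (G : int -> C) (z : C) : C := nlft_b G z / fstar (nlft_a G) z.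

Definition shiftseq (H : int -> C) (N : int) : int -> C := fun n => H (n - N).
Definition truncseq (H : int -> C) (M : int) : int -> C :=
  fun n => if n <= M then H n else 0.

End Nlft.

From HB Require Import structures.
From mathcomp Require Import all_boot all_order all_algebra.
From mathcomp Require Import classical_sets reals.
From mathcomp Require Import complex.
From mathcomp Require Import zify ring.
Set Implicit Arguments. Unset Strict Implicit. Unset Printing Implicit Defensive.
Import Order.TTheory GRing.Theory Num.Theory.
Local Open Scope ring_scope.

(* Shifting a sequence by N conjugates every step matrix by D = diag(1, z^N).
   Since F lives on (-oo, N1] and the shifted G^{<=M} on (N1, +oo), the transfer
   matrix of their sum factors as D X_G D^-1 X_F, and its bottom row gives the
   formulas for a^* and b.  Every transfer matrix has determinant 1 and
   satisfies X_11 = a^*, X_01 = b^*, so |a|^2 = 1 + |b|^2 on the unit circle.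
   There r(H) - r(F) = z^N b_G / (a_F^* Den) with
   Den = a_F^* a_G^* + z^N b_F^* b_G, and the reverse triangle inequality gives
   |a_F| |Den| >= |a_G| - |b_G| = |a_G| (1 - |r(G)|). *)

Section TwoByTwo.
Variable K : comNzRingType.
Implicit Types (A B : 'M[K]_2) (u v : K).

Lemma ord2P (i : 'I_2) : i = 0 \/ i = 1.
Proof. by case: i => [[|[|//]] ?]; [left|right]; apply: val_inj. Qed.

Lemma mulmx2E A B i j : (A * B) i j = A i 0 * B 0 j + A i 1 * B 1 j.
Proof.
rewrite !mxE (bigD1 (0 : 'I_2)) //= (bigD1 (1 : 'I_2)) //= big1 ?addr0 //.
by case=> [[|[|//]] ?].
Qed.

Lemma det_mx22 A : \det A = A 0 0 * A 1 1 - A 0 1 * A 1 0.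
Proof.
have lift01 : lift 0 (0 : 'I_1) = 1 :> 'I_2 by apply: val_inj.
have lift10 : lift 1 (0 : 'I_1) = 0 :> 'I_2 by apply: val_inj.
rewrite (expand_det_row _ 0) !big_ord_recl big_ord0 addr0 /cofactor !det_mx11 !mxE /=.
rewrite lift01 lift10 expr0 expr1; ring.
Qed.

Definition diag1 u : 'M[K]_2 := diag_mx (\row_(i < 2) if i == 0 then 1 else u).

Lemma diag1M u v : diag1 u * diag1 v = diag1 (u * v).
Proof.
rewrite -mulmxE mulmx_diag; congr diag_mx; apply/rowP => i.
by rewrite !mxE; case: ifP; rewrite ?mulr1.
Qed.

Lemma diag1_1 : diag1 1 = 1.
Proof.
rewrite /diag1 -[RHS]diag_const_mx; congr diag_mx; apply/rowP => i.
by rewrite !mxE; case: ifP.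
Qed.

Lemma diag1_conjE u v A : diag1 u * A * diag1 v =
  \matrix_(i, j) ((if i == 0 then 1 else u) * A i j * (if j == 0 then 1 else v)).
Proof. by apply/matrixP => i j; rewrite -mulmxE mul_mx_diag mul_diag_mx !mxE. Qed.

Lemma diag1_conj_mulE u v A B : u * v = 1 ->
  (diag1 u * A * diag1 v * B) 1 1 = A 1 1 * B 1 1 + u * A 1 0 * B 0 1 /\
  (diag1 u * A * diag1 v * B) 1 0 = u * A 1 0 * B 0 0 + A 1 1 * B 1 0.
Proof.
move=> uv; rewrite diag1_conjE !mulmx2E !mxE /=.
have -> : u * A 1 1 * v = A 1 1 by rewrite mulrAC uv mul1r.
by rewrite !mulr1; split; rewrite addrC.
Qed.

End TwoByTwo.

Section ComplexFacts.
Variable C : numClosedFieldType.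

(* Unlike [rmorphM] and friends, these keep the result in the [x^*] form that
   later rewrites (e.g. with [conjCK] or [c_real]) can match. *)
Lemma conjCD (x y : C) : (x + y)^* = x^* + y^*. Proof. exact: rmorphD. Qed.
Lemma conjCM (x y : C) : (x * y)^* = x^* * y^*. Proof. exact: rmorphM. Qed.
Lemma conjCV (x : C) : (x^-1)^* = (x^*)^-1. Proof. exact: fmorphV. Qed.
Lemma conjCXz (x : C) (n : int) : (x ^ n)^* = x^* ^ n. Proof. exact: fmorphXz. Qed.

Lemma conjVK (z : C) : (((z^*)^-1)^*)^-1 = z.
Proof. by rewrite conjCV invrK; apply: conjCK. Qed.

Lemma invr_conj_norm1 (z : C) : `|z| = 1 -> (z^*)^-1 = z.
Proof. by move=> z1; rewrite invC_norm norm_conjC z1 expr1n invr1 mul1r conjCK. Qed.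

Lemma normrXz_norm1 (z : C) (N : int) : `|z| = 1 -> `|z ^ N| = 1.
Proof. by move=> z1; case: N => k; rewrite ?normfV normrX z1 expr1n ?invr1. Qed.

End ComplexFacts.

Section ReflectionBound.
Variable C : numClosedFieldType.
Implicit Types a b c d w : C.

Lemma normr_lt_pseudo_unitary a b : a * a^* = 1 + b * b^* -> `|b| < `|a|.
Proof.
move=> hab; rewrite -(@ltr_sqr _ `|b| `|a|) ?nnegrE //.
by rewrite !normCK hab ltrDr ltr01.
Qed.

Lemma pseudo_unitary_gt0 a b : a * a^* = 1 + b * b^* -> 0 < `|a|.
Proof. by move/normr_lt_pseudo_unitary; apply: le_lt_trans. Qed.

Lemma subr_norm_le_mul_norm a b c d w : `|w| = 1 ->
  a * a^* = 1 + b * b^* -> c * c^* = 1 + d * d^* ->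
  `|c| - `|d| <= `|a| * `|a^* * c^* + w * b^* * d|.
Proof.
move=> hw hab hcd.
have ltba := normr_lt_pseudo_unitary hab; have ltdc := normr_lt_pseudo_unitary hcd.
have sqa : `|a| ^+ 2 = 1 + `|b| ^+ 2 by rewrite !normCK.
have hden : `|a| * `|c| - `|b| * `|d| <= `|a^* * c^* + w * b^* * d|.
  by have := lerB_normD (a^* * c^*) (w * b^* * d); rewrite !normrM !norm_conjC hw mul1r.
apply: le_trans (ler_wpM2l (normr_ge0 a) hden).
rewrite -subr_ge0.
have -> : `|a| * (`|a| * `|c| - `|b| * `|d|) - (`|c| - `|d|) =
  `|b| ^+ 2 * (`|c| - `|d|) + `|d| * `|a| * (`|a| - `|b|)
  + (`|c| - `|d|) * (`|a| ^+ 2 - (1 + `|b| ^+ 2)) by ring.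
rewrite sqa subrr mulr0 addr0.
by apply: addr_ge0; apply: mulr_ge0; rewrite ?sqr_ge0 ?mulr_ge0 // subr_ge0 ltW.
Qed.

Lemma reflection_update_subE a b c d w :
  a * a^* = 1 + b * b^* -> a^* != 0 -> a^* * c^* + w * b^* * d != 0 ->
  (w * d * a + b * c^*) / (a^* * c^* + w * b^* * d) - b / a^*
  = w * d / (a^* * (a^* * c^* + w * b^* * d)).
Proof.
set den := a^* * c^* + w * b^* * d => hab a0 den0.
have -> : (w * d * a + b * c^*) / den - b / a^*
    = ((w * d * a + b * c^*) * a^* - b * den) / (a^* * den).
  by field; rewrite a0 den0.
congr (_ / _); transitivity (w * d * (a * a^* - b * b^*)); first by rewrite /den; ring.
by rewrite hab addrK mulr1.
Qed.

Lemma norm_reflection_update_sub a b c d w : `|w| = 1 ->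
  a * a^* = 1 + b * b^* -> c * c^* = 1 + d * d^* ->
  `|(w * d * a + b * c^*) / (a^* * c^* + w * b^* * d) - b / a^*|
  <= `|d / c^*| / (1 - `|d / c^*|).
Proof.
move=> hw hab hcd.
have a0 := pseudo_unitary_gt0 hab; have c0 := pseudo_unitary_gt0 hcd.
have ltdc := normr_lt_pseudo_unitary hcd.
have hden := subr_norm_le_mul_norm hw hab hcd.
have cd0 : 0 < `|c| - `|d| by rewrite subr_gt0.
have den0 : 0 < `|a| * `|a^* * c^* + w * b^* * d| by apply: lt_le_trans hden.
rewrite reflection_update_subE //; first last.
- by rewrite -normr_gt0; move: den0; rewrite pmulr_rgt0.
- by rewrite -normr_gt0 norm_conjC.
rewrite !normrM !normfV !normrM !norm_conjC hw mul1r.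
have -> : `|d| / `|c| / (1 - `|d| / `|c|) = `|d| / (`|c| - `|d|).
  by field; rewrite !gt_eqF.
by rewrite ler_wpM2l // lef_pV2 ?posrE.
Qed.

End ReflectionBound.


Section TransferMatrices.
Variable R : realType.
Local Notation C := R[i].

Lemma transfer0 (G : int -> C) (L : int) (z : C) : transfer G L 0 z = 1.
Proof. by rewrite /transfer big_nil. Qed.

Lemma transferS (G : int -> C) (L : int) (len : nat) (z : C) :
  transfer G L len.+1 z = step G (L + len%:Z) z * transfer G L len z.
Proof. by rewrite /transfer -[len.+1]addn1 iotaD rev_cat /= big_cons add0n. Qed.

Lemma transferD (G : int -> C) (L : int) (m len : nat) (z : C) :
  transfer G L (m + len) z = transfer G (L + m%:Z) len z * transfer G L m z.
Proof.
elim: len => [|len IH]; first by rewrite addn0 transfer0 mul1r.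
by rewrite addnS !transferS IH mulrA PoszD addrA.
Qed.

Lemma eq_transfer (G G' : int -> C) (L : int) (len : nat) (z : C) :
  (forall k, (k < len)%N -> G (L + k%:Z) = G' (L + k%:Z)) ->
  transfer G L len z = transfer G' L len z.
Proof.
move=> eqG; apply: eq_big_seq => k; rewrite mem_rev mem_iota add0n => /andP[_ lt_k].
by rewrite /step eqG.
Qed.

Lemma stepE (G : int -> C) (n : int) (z : C) i j : step G n z i j =
  (sqrtC (1 - `|G n| ^+ 2))^-1 *
  (if i == j then 1 else if i == 0 then (G n)^* * z ^ (- n) else G n * z ^ n).
Proof. by rewrite /step !mxE. Qed.

Lemma step_eq1 (G : int -> C) (n : int) (z : C) : G n = 0 -> step G n z = 1.
Proof.
move=> Gn0; rewrite /step Gn0 normr0 expr0n subr0 sqrtC1 invr1 scale1r.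
apply/matrixP => i j; rewrite !mxE.
by case: (ord2P i) => ->; case: (ord2P j) => ->; rewrite ?conjC0 ?mul0r.
Qed.

Lemma transfer_eq1 (G : int -> C) (L : int) (len : nat) (z : C) :
  (forall k, (k < len)%N -> G (L + k%:Z) = 0) -> transfer G L len z = 1.
Proof.
move=> G0; apply: big1_seq => k; rewrite mem_rev mem_iota add0n => /andP[_ lt_k].
exact/step_eq1/G0.
Qed.

Lemma transfer_widen (G : int -> C) (L L' : int) (len len' : nat) (z : C) :
  L' <= L -> L + len%:Z <= L' + len'%:Z ->
  (forall n, n < L \/ L + len%:Z <= n -> G n = 0) ->
  transfer G L' len' z = transfer G L len z.
Proof.
move=> le_L le_end G0.
have [a ea] : exists a : nat, a%:Z = L - L' by exists (absz (L - L')%R); lia.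
have [b eb] : exists b : nat, b%:Z = L' + len'%:Z - (L + len%:Z).
  by exists (absz (L' + len'%:Z - (L + len%:Z))%R); lia.
have -> : len' = (a + len + b)%N by lia.
have eL : L' + a%:Z = L by lia.
rewrite !transferD eL PoszD addrA eL.
rewrite (@transfer_eq1 _ (L + len%:Z)) => [|k _]; last by apply: G0; right; lia.
rewrite (@transfer_eq1 _ L') => [|k lt_k]; last by apply: G0; left; lia.
by rewrite mul1r mulr1.
Qed.

Lemma XfinE (G : int -> C) (K : nat) (L : int) (len : nat) (z : C) :
  (forall n : int, (K < `|n|)%N -> G n = 0) ->
  L <= - K%:Z -> K%:Z < L + len%:Z ->
  Xfin G z = transfer G L len z.
Proof.
move=> GK le_L lt_end.
have GK0 : forall n : int, (supp_bound G < `|n|)%N -> G n = 0 :=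
  xgetPex 0%N (ex_intro (fun K => forall n : int, (K < `|n|)%N -> G n = 0) K GK).
set K0 := supp_bound G in GK0 *.
set B : nat := (K0 + K + absz L + absz (L + len%:Z)%R)%N.
rewrite /Xfin -/K0.
rewrite -(@transfer_widen G (- K0%:Z) (- B%:Z) (2 * K0).+1 (2 * B).+1);
  [|lia|lia|by move=> n ?; apply: GK0; lia].
by rewrite -(@transfer_widen G L (- B%:Z) len (2 * B).+1) //;
  [lia|lia|move=> n ?; apply: GK; lia].
Qed.

Lemma step_shift (G : int -> C) (N n : int) (z : C) : z != 0 ->
  step (shiftseq G N) n z = diag1 (z ^ N) * step G (n - N) z * diag1 (z ^ (- N)).
Proof.
move=> z0; apply/matrixP => i j; rewrite diag1_conjE !mxE /shiftseq.
case: (ord2P i) => ->; case: (ord2P j) => -> //=; rewrite ?mulr1 ?mul1r //.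
- by rewrite -!mulrA -expfzDr // opprB addrAC subrr add0r.
- by rewrite [RHS]mulrCA [X in _ = _ * X]mulrCA -expfzDr // [N + _]addrC subrK.
- by rewrite mulrAC -expfzDr // subrr expr0z mul1r.
Qed.

Lemma transfer_shift (G : int -> C) (N L : int) (len : nat) (z : C) : z != 0 ->
  transfer (shiftseq G N) L len z =
  diag1 (z ^ N) * transfer G (L - N) len z * diag1 (z ^ (- N)).
Proof.
move=> z0; have diag1_inv : diag1 (z ^ (- N)) * diag1 (z ^ N) = 1.
  by rewrite diag1M -expfzDr // addNr expr0z diag1_1.
elim: len => [|len IH].
  by rewrite !transfer0 mulr1 diag1M -expfzDr // subrr expr0z diag1_1.
rewrite !transferS IH step_shift // -[L + len%:Z - N]addrAC.
by rewrite -!mulrA; congr (_ * _); congr (_ * _); rewrite !mulrA diag1_inv mul1r.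
Qed.

Definition star_sym (X : C -> 'M[C]_2) := forall z,
  X z 1 1 = fstar (fun w => X w 0 0) z /\ X z 0 1 = fstar (fun w => X w 1 0) z.

Lemma star_symM (X Y : C -> 'M[C]_2) :
  star_sym X -> star_sym Y -> star_sym (fun z => X z * Y z).
Proof.
rewrite /star_sym /fstar => sX sY z.
have [X11 X01] := sX z; have [Y11 Y01] := sY z.
have [X11' X01'] := sX ((z^*)^-1); have [Y11' Y01'] := sY ((z^*)^-1).
rewrite conjVK in X11' X01' Y11' Y01'.
have X10 : X z 1 0 = (X ((z^*)^-1) 0 1)^* by rewrite X01' conjCK.
have X00 : X z 0 0 = (X ((z^*)^-1) 1 1)^* by rewrite X11' conjCK.
rewrite !mulmx2E !conjCD !conjCM X11 X01 X10 X00 Y11 Y01.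
by split; rewrite addrC.
Qed.

Lemma step_star_sym (G : int -> C) (n : int) : `|G n| < 1 -> star_sym (step G n).
Proof.
move=> Gn1 z; rewrite /fstar.
have c_real : ((sqrtC (1 - `|G n| ^+ 2))^-1)^* = (sqrtC (1 - `|G n| ^+ 2))^-1.
  apply/CrealP/ger0_real; rewrite invr_ge0 sqrtC_ge0 subr_ge0.
  exact/exprn_ile1/ltW.
(* The [LHS]/[RHS] patterns stop [rewrite] from trying to unify [z] with
   [1 / conj z]; that conversion problem does not terminate in practice. *)
split; rewrite [LHS]stepE [in RHS]stepE conjCM c_real; congr (_ * _).
  by rewrite conjC1.
by rewrite conjCM conjCXz conjCV conjCK exprz_inv.
Qed.

Lemma star_sym1 : star_sym (fun=> 1).
Proof. by move=> z; rewrite /fstar !mxE conjC1 conjC0. Qed.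

Lemma transfer_star_sym (G : int -> C) (L : int) (len : nat) :
  (forall n, `|G n| < 1) -> star_sym (transfer G L len).
Proof.
move=> G1; elim: len => [|len IH].
  have -> : transfer G L 0 = fun=> 1 by apply: boolp.funext => z; rewrite transfer0.
  exact: star_sym1.
have -> : transfer G L len.+1 = fun z => step G (L + len%:Z) z * transfer G L len z.
  by apply: boolp.funext => z; rewrite transferS.
exact/star_symM/IH/step_star_sym.
Qed.

Lemma det_step (G : int -> C) (n : int) (z : C) :
  `|G n| < 1 -> z != 0 -> \det (step G n z) = 1.
Proof.
move=> Gn1 z0; rewrite det_mx22 !stepE /=.
set c := (sqrtC (1 - `|G n| ^+ 2))^-1.
have c2 : c * c * (1 - `|G n| ^+ 2) = 1.
  rewrite /c -expr2 exprVn sqrtCK mulVf // subr_eq0 eq_sym lt_eqF //.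
  exact: exprn_ilt1.
have zz : z ^ (- n) * z ^ n = 1 by rewrite -expfzDr // addNr expr0z.
transitivity (c * c * (1 - G n * (G n)^* * (z ^ (- n) * z ^ n))); first by ring.
by rewrite zz mulr1 -normCK.
Qed.

Lemma det_transfer (G : int -> C) (L : int) (len : nat) (z : C) :
  (forall n, `|G n| < 1) -> z != 0 -> \det (transfer G L len z) = 1.
Proof.
move=> G1 z0; elim: len => [|len IH]; first by rewrite transfer0 det1.
by rewrite transferS detM IH det_step // mulr1.
Qed.

Lemma fstar_norm1 (f : C -> C) (z : C) : `|z| = 1 -> fstar f z = (f z)^*.
Proof. by move=> z1; rewrite /fstar invr_conj_norm1. Qed.

Lemma Xfin_starE (G : int -> C) (z : C) : (forall n, `|G n| < 1) ->
  Xfin G z 1 1 = fstar (nlft_a G) z /\ Xfin G z 0 1 = fstar (nlft_b G) z.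
Proof. by move=> G1; apply: transfer_star_sym. Qed.

Lemma nlft_pseudo_unitary (G : int -> C) (z : C) :
  (forall n, `|G n| < 1) -> `|z| = 1 ->
  nlft_a G z * (nlft_a G z)^* = 1 + nlft_b G z * (nlft_b G z)^*.
Proof.
move=> G1 z1; have z0 : z != 0 by rewrite -normr_gt0 z1.
have := det_transfer (- (supp_bound G)%:Z) (2 * supp_bound G).+1 G1 z0.
have [a_star b_star] := Xfin_starE z G1.
rewrite -/(Xfin G z) det_mx22 a_star b_star !fstar_norm1 // => <-.
by rewrite /nlft_a /nlft_b; ring.
Qed.

Lemma Xfin_glue (F G : int -> C) (N1 N2 N : int) (z : C) :
  (exists K : nat, forall n : int, (K < `|n|)%N -> F n = 0) ->
  (exists K : nat, forall n : int, (K < `|n|)%N -> G n = 0) ->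
  (forall n, N1 < n -> F n = 0) -> (forall n, n < - N2 -> G n = 0) ->
  N1 + N2 < N -> z != 0 ->
  Xfin (fun n => F n + shiftseq G N n) z =
  diag1 (z ^ N) * Xfin G z * diag1 (z ^ (- N)) * Xfin F z.
Proof.
move=> [KF FK] [KG GK] F_high G_low ltN z0.
set H := fun n => _.
have H_low n : n <= N1 -> H n = F n.
  by move=> le_n; rewrite /H /shiftseq G_low ?addr0 //; lia.
have H_high n : N1 < n -> H n = shiftseq G N n.
  by move=> lt_n; rewrite /H F_high // add0r.
set K : nat := (KF + KG + absz N + absz N1 + 1)%N.
have HK n : (K < `|n|)%N -> H n = 0.
  by move=> lt_n; rewrite /H /shiftseq FK ?GK ?add0r //; lia.
have [m em] : exists m : nat, m%:Z = N1 + 1 + K%:Z.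
  by exists (absz (N1 + 1 + K%:Z)%R); lia.
have [l el] : exists l : nat, l%:Z = K%:Z - N1 by exists (absz (K%:Z - N1)%R); lia.
rewrite (@XfinE H K (- K%:Z) (2 * K).+1 z HK); [|lia|lia].
rewrite (@XfinE F KF (- K%:Z) (2 * K).+1 z FK); [|lia|lia].
rewrite (@XfinE G KG (- K%:Z - N) (2 * K).+1 z GK); [|lia|lia].
have -> : (2 * K).+1 = (m + l)%N by lia.
rewrite -transfer_shift // !transferD.
rewrite [transfer F _ l z]transfer_eq1 => [|k _]; last by apply: F_high; lia.
rewrite [transfer (shiftseq G N) _ m z]transfer_eq1 => [|k lt_k]; last first.
  by rewrite /shiftseq G_low //; lia.
rewrite mul1r mulr1; congr (_ * _); apply: eq_transfer => k lt_k.
  by rewrite H_high //; lia.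
by rewrite H_low //; lia.
Qed.

Lemma nlft_glue (F G : int -> C) (N1 N2 N : int) (z : C) :
  disc_fin_seq F -> disc_fin_seq G ->
  (forall n, N1 < n -> F n = 0) -> (forall n, n < - N2 -> G n = 0) ->
  N1 + N2 < N -> z != 0 ->
  let H := fun n => F n + shiftseq G N n in
  fstar (nlft_a H) z
    = fstar (nlft_a F) z * fstar (nlft_a G) z + z ^ N * fstar (nlft_b F) z * nlft_b G z /\
  nlft_b H z = z ^ N * nlft_b G z * nlft_a F z + nlft_b F z * fstar (nlft_a G) z.
Proof.
move=> [F1 FK] [G1 GK] F_high G_low ltN z0 H.
have H1 n : `|H n| < 1.
  rewrite /H /shiftseq; case: (lerP n N1) => [le_n|lt_n].
    by rewrite G_low ?addr0 //; lia.
  by rewrite F_high // add0r.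
have [aH _] := Xfin_starE z H1; have [aF bF] := Xfin_starE z F1.
have [aG _] := Xfin_starE z G1.
rewrite -aH -aF -bF -aG /nlft_a /nlft_b (Xfin_glue FK GK F_high G_low ltN z0).
have zNK : z ^ N * z ^ (- N) = 1 by rewrite -expfzDr // subrr expr0z.
have [-> ->] := diag1_conj_mulE (Xfin G z) (Xfin F z) zNK.
by split; ring.
Qed.

Lemma truncseq_disc_fin_seq (G : int -> C) (M : int) :
  disc_fin_seq G -> disc_fin_seq (truncseq G M).
Proof.
move=> [G1 [K GK]]; split => [n|]; first by rewrite /truncseq; case: ifP; rewrite ?normr0.
by exists K => n lt_n; rewrite /truncseq GK // if_same.
Qed.

End TransferMatrices.

Theorem lemma2p1 (R : realType) (F G : int -> R[i]) (N1 N2 N M : int)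
  (hF : disc_fin_seq F) (hG : disc_fin_seq G)
  (suppF : forall n : int, N1 < n -> F n = 0)
  (suppG : forall n : int, n < - N2 -> G n = 0)
  (hN : N1 + N2 < N) (hM : - N2 <= M) :
  let GM := truncseq G M in
  let H := fun n : int => F n + shiftseq GM N n in
  (forall z : R[i], z != 0 ->
     fstar (nlft_a H) z
     = fstar (nlft_a F) z * fstar (nlft_a GM) z
       + z ^ N * fstar (nlft_b F) z * nlft_b GM z) /\
  (forall z : R[i], z != 0 ->
     nlft_b H z = z ^ N * nlft_b GM z * nlft_a F z + nlft_b F z * fstar (nlft_a GM) z) /\
  (forall z : R[i], `|z| = 1 ->
     `|nlft_r H z - nlft_r F z| <= `|nlft_r GM z| / (1 - `|nlft_r GM z|)).
Proof.
move=> GM H.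
have GM_disc : disc_fin_seq GM by apply: truncseq_disc_fin_seq.
have GM_low n : n < - N2 -> GM n = 0.
  by move=> lt_n; rewrite /GM /truncseq suppG // if_same.
have glue z (z0 : z != 0) := nlft_glue hF GM_disc suppF GM_low hN z0.
split; [|split] => [z z0|z z0|z z1]; [exact: (glue z z0).1 | exact: (glue z z0).2 |].
have z0 : z != 0 by rewrite -normr_gt0 z1.
have [aH bH] := glue z z0.
rewrite /nlft_r bH aH !fstar_norm1 //.
apply: norm_reflection_update_sub; first exact: normrXz_norm1.
  exact: nlft_pseudo_unitary hF.1 z1.
exact: nlft_pseudo_unitary GM_disc.1 z1.
Qed.
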